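(* Let $X$ be a connected cubic graph and let $G\leq\mathrm{Aut}\,X$ be an $s$-regular group of automorphisms with $s\in\{1,4\}$. Then every connected $G$-split $2$-cover of $X$ is the canonical double cover of $X$.
   Context: Graphs are finite and simple; maps are composed on the right. An $s$-arc is a sequence $(v_0,\dots,v_s)$ of vertices with $v_{i-1}\sim v_i$ and $v_{i-1}\neq v_{i+1}$; $G$ is $s$-regular if it acts regularly on the set of $s$-arcs. A regular covering projection $\wp\colon\tilde X\to X$ is a surjective graph homomorphism, locally bijective on neighbourhoods, whose group $\mathrm{CT}(\wp)$ of covering transformations (automorphisms $c$ of $\tilde X$ with $c\wp=\wp$) acts regularly on fibres; a $2$-cover has $\mathrm{CT}(\wp)\cong\mathbb{Z}_2$. A lift of $g\in\mathrm{Aut}\,X$ is $\tilde g\in\mathrm{Aut}\,\tilde X$ with $\wp g=\tilde g\wp$; $\wp$ is a $G$-split $2$-cover if every element of $G$ lifts and $\mathrm{CT}(\wp)$ has a complement in the lifted group $\tilde G$ (the group of all lifts). The canonical double cover of $X$ is the projection $(u,i)\mapsto u$ from the graph on $V(X)\times\mathbb{Z}_2$ with $(u,i)\sim(v,i+1)$ whenever $u\sim v$ (up to isomorphism of covering projections). *)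

From mathcomp Require Import all_boot all_fingroup.
Set Implicit Arguments.
Unset Strict Implicit.
Unset Printing Implicit Defensive.
Local Open Scope group_scope.

Definition simple_graph (V : finType) (e : rel V) : Prop :=
  symmetric e /\ irreflexive e.

Definition connected (V : finType) (e : rel V) : Prop :=
  (0 < #|V|)%N /\ forall x y : V, connect e x y.

Definition cubic (V : finType) (e : rel V) : Prop :=
  forall x : V, #|[set y | e x y]| = 3%N.

Definition Aut_graph (V : finType) (e : rel V) : {set {perm V}} :=
  [set g : {perm V} | [forall x, forall y, e (g x) (g y) == e x y]].

Fixpoint nonbacktrack (V : eqType) (a : seq V) : bool :=
  match a with
  | x :: ((_ :: z :: _) as t) => (x != z) && nonbacktrack t
  | _ => true
  end.

Definition is_sarc (V : finType) (e : rel V) (s : nat) (a : seq V) : bool :=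
  (size a == s.+1) &&
  match a with
  | x :: t => path e x t && nonbacktrack a
  | [::] => false
  end.

Definition s_regular (V : finType) (e : rel V) (G : {set {perm V}}) (s : nat)
  : Prop :=
  forall a b : seq V, is_sarc e s a -> is_sarc e s b ->
    exists! g : {perm V}, g \in G /\ map g a = b.

Definition CT (W V : finType) (f : rel W) (p : W -> V) : {set {perm W}} :=
  [set c : {perm W} | (c \in Aut_graph f) && [forall w, p (c w) == p w]].

Definition regular_covering (V W : finType) (e : rel V) (f : rel W)
  (p : W -> V) : Prop :=
  [/\ forall v : V, exists w : W, p w = v,
      forall x y : W, f x y -> e (p x) (p y),
      forall w : W, {in [set y | f w y] &, injective p} /\
                    p @: [set y | f w y] = [set v | e (p w) v]
    & forall w1 w2 : W, p w1 = p w2 ->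
        exists! c : {perm W}, c \in CT f p /\ c w1 = w2].

(* 2-cover: CT(p) is isomorphic to Z_2, i.e. has order 2 *)
Definition two_cover (V W : finType) (e : rel V) (f : rel W) (p : W -> V)
  : Prop :=
  regular_covering e f p /\ #|CT f p| = 2%N.

(* tg is a lift of g: p g = tg p (maps composed on the right) *)
Definition is_lift (V W : finType) (e : rel V) (f : rel W) (p : W -> V)
  (g : {perm V}) (tg : {perm W}) : Prop :=
  tg \in Aut_graph f /\ forall w, p (tg w) = g (p w).

Definition lifted_group (V W : finType) (f : rel W) (p : W -> V)
  (G : {set {perm V}}) : {set {perm W}} :=
  [set tg : {perm W} | (tg \in Aut_graph f) &&
     [exists g in G, [forall w, p (tg w) == g (p w)]]].

Definition G_split (V W : finType) (e : rel V) (f : rel W) (p : W -> V)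
  (G : {set {perm V}}) : Prop :=
  (forall g, g \in G -> exists tg, is_lift e f p g tg) /\
  [complements to CT f p in lifted_group f p G] != set0.

Definition cdc_rel (V : finType) (e : rel V) : rel (V * bool) :=
  fun x y => e x.1 y.1 && (x.2 != y.2).

Definition is_canonical_double_cover (V W : finType) (e : rel V) (f : rel W)
  (p : W -> V) : Prop :=
  exists phi : W -> V * bool,
    [/\ bijective phi, forall x y, f x y = cdc_rel e (phi x) (phi y)
      & forall w, (phi w).1 = p w].

From mathcomp Require Import all_boot all_fingroup cyclic.

(* Let c be the nontrivial covering transformation and K a complement of <c>
   in the lifted group; K maps isomorphically onto G by projection.  For g in
   the stabiliser G_v, the lift of g in K fixes or swaps the fibre over v,
   which gives homomorphisms G_v -> Z/2 that agree along edges fixed by g and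
   are invariant under conjugation.  For s = 1, |G_v| = 3, so they are
   trivial.  For s = 4, a nontrivial one is nontrivial on every element acting
   on the neighbours of a vertex as a transposition; walking along edges, this
   forces every element fixing a vertex and its neighbours to be the identity,
   whereas 4-arc-regularity provides such an element that is not.  So an
   element of K stabilising a fibre fixes it pointwise; hence the K-orbit O
   of a vertex meets each fibre once and contains no edge, and O, c(O) is the
   bipartition of the canonical double cover. *)

Set Implicit Arguments.
Unset Strict Implicit.
Unset Printing Implicit Defensive.
Local Open Scope group_scope.

Section CubicGraph.
Variables (V : finType) (e : rel V).

Lemma Aut_graphE g x y : g \in Aut_graph e -> e (g x) (g y) = e x y.
Proof. by rewrite inE => /forallP /(_ x) /forallP /(_ y) /eqP. Qed.

Definition other_nbrs x y a a' := [&& e x a, e x a', a != a', a != y & a' != y].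

Hypothesis cubic_e : cubic e.

Lemma cubic_nbr x : exists y, e x y.
Proof.
have : 0 < #|[set y | e x y]| by rewrite cubic_e.
by case/card_gt0P => y; rewrite inE; exists y.
Qed.

Lemma cubic_nbr3 x y y1 y2 z : e x y -> other_nbrs x y y1 y2 -> e x z ->
  [|| z == y, z == y1 | z == y2].
Proof.
move=> exy /and5P[ex1 ex2 n12 n1 n2] exz; apply/negPn/negP.
rewrite !negb_or => /and3P[nzy nz1 nz2].
have : #|z |: (y |: (y1 |: [set y2]))| <= #|[set t | e x t]|.
  apply/subset_leq_card/subsetP => t; rewrite !inE.
  by case/or4P=> /eqP->.
by rewrite cubic_e !cardsU1 cards1 !inE !negb_or nzy nz1 nz2 eq_sym n1 eq_sym n2 n12.
Qed.

Lemma cubic_other_nbrs x y : e x y -> exists a a', other_nbrs x y a a'.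
Proof.
move=> exy; have : #|[set z | e x z] :\ y| == 2.
  by have := cardsD1 y [set z | e x z]; rewrite cubic_e inE exy => -[->].
case/cards2P => a [a' [naa' Ey]]; exists a, a'.
have : a \in [set z | e x z] :\ y by rewrite Ey !inE eqxx.
have : a' \in [set z | e x z] :\ y by rewrite Ey !inE eqxx orbT.
by rewrite /other_nbrs !inE => /andP[-> ->] /andP[-> ->]; rewrite naa'.
Qed.

Section AutFix.
Variables (g : {perm V}) (x y a a' : V).
Hypotheses (gA : g \in Aut_graph e) (gx : g x = x) (gy : g y = y).
Hypotheses (exy : e x y) (xya : other_nbrs x y a a').

Lemma Aut_fix_edge : (g a = a /\ g a' = a') \/ (g a = a' /\ g a' = a).
Proof.
have img z : e x z -> z != y -> g z = a \/ g z = a'.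
  move=> exz nzy; have exgz : e x (g z) by rewrite -{1}gx Aut_graphE.
  case/or3P: (cubic_nbr3 exy xya exgz) => /eqP gz; [|by left|by right].
  by move: nzy; rewrite -(inj_eq (@perm_inj _ g)) gz gy eqxx.
case/and5P: xya => ea ea' naa' nay na'y.
have gaa' : g a != g a' by rewrite (inj_eq (@perm_inj _ g)).
by case: (img a ea nay) (img a' ea' na'y) gaa' => -> [] ->; rewrite ?eqxx; auto.
Qed.

Lemma Aut_fix_nbrs : g a = a -> forall z, e x z -> g z = z.
Proof.
move=> ga; have ga' : g a' = a'.
  case: Aut_fix_edge => [[] //|[gaa' _]].
  by case/and5P: xya => _ _ /eqP[]; rewrite -ga gaa'.
by move=> z exz; case/or3P: (cubic_nbr3 exy xya exz) => /eqP->.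
Qed.

End AutFix.
End CubicGraph.

Lemma nonbacktrack_map (T T' : eqType) (f : T -> T') (a : seq T) :
  injective f -> nonbacktrack (map f a) = nonbacktrack a.
Proof.
move=> finj; elim: a => [|x t IH] //=.
by case: t IH => [|y [|z u]] //= IH; rewrite (inj_eq finj) IH.
Qed.

Section Arcs.
Variables (V : finType) (e : rel V).

Lemma sarc_cons s z x y t :
  is_sarc e s.+1 [:: z, x, y & t] = [&& e z x, z != y & is_sarc e s [:: x, y & t]].
Proof.
rewrite /is_sarc /= eqSS.
by case: (size t == s); case: (e z x); case: (z != y); rewrite /= ?andbF.
Qed.

Lemma sarcE s x t :
  is_sarc e s (x :: t) = [&& size t == s, path e x t & nonbacktrack (x :: t)].
Proof. by []. Qed.

Lemma sarc1E a b : is_sarc e 1 [:: a; b] = e a b.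
Proof. by rewrite /is_sarc /= !andbT. Qed.

Lemma sarc2E a b c : is_sarc e 2 [:: a; b; c] = [&& e a b, e b c & a != c].
Proof. by rewrite /is_sarc /= !andbT andbA. Qed.

Lemma sarc4E a b c d x : is_sarc e 4 [:: a; b; c; d; x] =
  [&& e a b, e b c, e c d, e d x, a != c, b != d & c != x].
Proof. by rewrite /is_sarc /= !andbT -!andbA. Qed.

Lemma sarc_map s g a : g \in Aut_graph e -> is_sarc e s (map g a) = is_sarc e s a.
Proof.
move=> gA; case: a => [|x t] //; rewrite map_cons !sarcE size_map path_map.
rewrite -map_cons nonbacktrack_map; last exact: perm_inj.
by rewrite (@eq_path _ _ e) // => y z /=; apply: Aut_graphE.
Qed.

Hypotheses (sym_e : symmetric e) (cubic_e : cubic e).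

Lemma sarc_extend k a n : 0 < k -> is_sarc e k a ->
  exists2 t, size t = n & is_sarc e (n + k) (t ++ a).
Proof.
move=> k_gt0 ak; elim: n => [|n [t tn tak]]; first by exists [::].
case Ea: (t ++ a) tak => [|x [|y r]] tak.
- by [].
- by move: tak; rewrite sarcE andbT eq_sym addn_eq0 (eqn0Ngt k) k_gt0 andbF.
have exy : e x y by move: tak; rewrite sarcE => /and3P[_ /andP[]].
have [z [z' /and5P[exz _ _ nzy _]]] := cubic_other_nbrs cubic_e exy.
exists (z :: t); first by rewrite /= tn.
by rewrite cat_cons Ea addSn sarc_cons tak sym_e exz nzy.
Qed.

Section Regular.
Variables (G : {group {perm V}}) (s : nat).
Hypotheses (sGA : G \subset Aut_graph e) (sreg : s_regular e G s).

Lemma sregular_eq g1 g2 a : is_sarc e s a -> g1 \in G -> g2 \in G ->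
  map g1 a = map g2 a -> g1 = g2.
Proof.
move=> as_ G1 G2 E.
have bs : is_sarc e s (map g1 a) by rewrite sarc_map // (subsetP sGA).
have [g [_ g_uniq]] := sreg as_ bs.
by rewrite -(g_uniq g1) // (g_uniq g2).
Qed.

Lemma sregular_karc k a b : 0 < k <= s -> is_sarc e k a -> is_sarc e k b ->
  exists2 g, g \in G & map g a = b.
Proof.
case/andP=> k_gt0 ks ak bk.
have [t tn tak] := sarc_extend (s - k) k_gt0 ak.
have [t' t'n t'bk] := sarc_extend (s - k) k_gt0 bk.
rewrite subnK // in tak t'bk.
have [g [[gG]]] := sreg tak t'bk; rewrite map_cat => /eqP.
by rewrite eqseq_cat ?size_map ?tn ?t'n // => /andP[_ /eqP]; exists g.
Qed.

Lemma sregular_arc x a y b : 0 < s -> e x a -> e y b ->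
  exists2 g, g \in G & g x = y /\ g a = b.
Proof.
move=> s_gt0 exa eyb.
have [g gG [<- <-]] : exists2 g, g \in G & map g [:: x; a] = [:: y; b].
  by apply: (sregular_karc (k := 1)); rewrite ?sarc1E.
by exists g.
Qed.

Lemma sregular_vertex x y : 0 < s -> exists2 g, g \in G & g x = y.
Proof.
move=> s_gt0; have [a exa] := cubic_nbr cubic_e x; have [b eyb] := cubic_nbr cubic_e y.
by have [g gG [gx _]] := sregular_arc s_gt0 exa eyb; exists g.
Qed.

End Regular.
End Arcs.

Section StabilizerCharacter.
Variables (V : finType) (e : rel V) (G : {group {perm V}}).
Variable chi : V -> {perm V} -> bool.
(* [chi v] is a homomorphism from the stabiliser of [v] to Z/2, written on
   bool with identity [true] and product [==]. *)
Hypothesis chiM : forall v g1 g2, g1 \in G -> g2 \in G -> g1 v = v -> g2 v = v ->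
  chi v (g1 * g2) = (chi v g1 == chi v g2).

Lemma chi1 v : chi v 1.
Proof. by have := chiM (group1 G) (group1 G) (perm1 v) (perm1 v); rewrite mulg1 eqxx. Qed.

Lemma chi_sq v g : g \in G -> g v = v -> chi v (g * g).
Proof. by move=> gG gv; rewrite chiM ?eqxx. Qed.

Lemma chiMl v g m : g \in G -> m \in G -> g v = v -> m v = v -> chi v m ->
  chi v (g * m) = chi v g.
Proof. by move=> gG mG gv mv chim; rewrite chiM // chim eqb_id. Qed.

Hypotheses (sym_e : symmetric e) (cubic_e : cubic e) (sGA : G \subset Aut_graph e).

Section OneRegular.
Hypothesis sreg : s_regular e G 1.

Lemma card_stab1 v : #|'C_G[v | 'P]| = 3.
Proof.
have [u evu] := cubic_nbr cubic_e v.
have stabP g : reflect (g \in G /\ g v = v) (g \in 'C_G[v | 'P]).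
  rewrite in_setI; apply: (iffP andP) => -[gG].
    by move/astab1P.
  by move=> gv; split=> //; apply/astab1P.
rewrite -(cubic_e v) -(card_in_imset (f := fun g : {perm V} => g u)).
  apply: eq_card => y; rewrite [RHS]inE; apply/imsetP/idP => [[g]|evy].
    by case/stabP => gG gv ->; rewrite -{1}gv Aut_graphE // (subsetP sGA).
  have [g gG [gv gu]] := sregular_arc sym_e cubic_e sreg isT evu evy.
  by exists g => //; apply/stabP.
move=> g1 g2 /stabP[G1 g1v] /stabP[G2 g2v] E.
by apply: (sregular_eq sGA sreg (a := [:: v; u])); rewrite ?sarc1E //= g1v g2v E.
Qed.

Lemma stab_char_trivial1 v g : g \in G -> g v = v -> chi v g.
Proof.
move=> gG gv; have g3 : g * (g * g) = 1.
  rewrite -(@expg_cardG _ 'C_G[v | 'P] g) ?card_stab1 ?expgS ?expg0 ?mulg1 //.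
  by rewrite in_setI gG; apply/astab1P.
by have := chi1 v; rewrite -g3 chiM ?groupM ?permM ?gv // chi_sq // eqb_id.
Qed.

End OneRegular.

Section FourRegular.
Hypothesis sreg : s_regular e G 4.
Hypothesis chi_edge : forall v u g, g \in G -> e v u -> g v = v -> g u = u ->
  chi v g = chi u g.
Hypothesis chiJ : forall v g r, g \in G -> r \in G -> g v = v ->
  chi (r v) (g ^ r) = chi v g.

Let AutG g : g \in G -> g \in Aut_graph e := subsetP sGA g.

Lemma sreg4_map a b c d x a' b' c' d' x' :
  is_sarc e 4 [:: a; b; c; d; x] -> is_sarc e 4 [:: a'; b'; c'; d'; x'] ->
  exists2 g, g \in G & [/\ g a = a', g b = b', g c = c', g d = d' & g x = x'].
Proof. by move=> A A'; have [g [[gG [<- <- <- <- <-]] _]] := sreg A A'; exists g. Qed.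

Lemma sreg4_fix g a b c d x : is_sarc e 4 [:: a; b; c; d; x] -> g \in G ->
  g a = a -> g b = b -> g c = c -> g d = d -> g x = x -> g = 1.
Proof.
move=> A gG ga gb gc gd gx; apply: (sregular_eq sGA sreg A gG (group1 G)).
by rewrite /= !perm1 ga gb gc gd gx.
Qed.

(* [h] maps the 4-arc [ai; ui; v; uj; aj] to its reverse with [ai] replaced
   by [ai'], so [h * h] agrees with [k] on that arc. *)
Lemma stab_square v ui uj ai ai' aj aj' k :
  is_sarc e 4 [:: ai; ui; v; uj; aj] -> is_sarc e 4 [:: ai'; ui; v; uj; aj'] ->
  ai != ai' -> aj != aj' -> k \in G -> k v = v -> k ui = ui -> k uj = uj ->
  k ai = ai' -> k aj = aj' -> exists2 h, h \in G & h v = v /\ k = h * h.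
Proof.
move=> A A' naa naa' kG kv kui kuj kai kaj.
move: (A) (A'); rewrite !sarc4E.
case/and4P=> eai eiv evj /and4P[eaj nai nij naj].
case/and4P=> eai' _ _ /and4P[eaj' nai' _ naj'].
have [h hG [h1 h2 h3 h4 h5]] := sreg4_map A (a' := aj) (b' := uj) (c' := v)
  (d' := ui) (x' := ai') ltac:(by rewrite sarc4E (sym_e aj uj) (sym_e uj v) (sym_e v ui)
     (sym_e ui ai') eaj evj eiv eai' eq_sym naj eq_sym nij eq_sym nai').
have h6 : h ai' = aj'.
  have ehj : e uj (h ai') by rewrite -h2 Aut_graphE ?AutG // sym_e.
  have ejv : e uj v by rewrite sym_e.
  have oj : other_nbrs e uj v aj aj' by apply/and5P; split; rewrite // eq_sym.
  case/or3P: (cubic_nbr3 cubic_e ejv oj ehj) => /eqP hai //.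
    by move: nai'; rewrite eq_sym -(inj_eq (@perm_inj _ h)) h3 hai eqxx.
  by move: naa; rewrite -(inj_eq (@perm_inj _ h)) h1 hai eqxx.
exists h => //; split=> //; apply: (sregular_eq sGA sreg A kG (groupM hG hG)).
by rewrite /= !permM kai kui kv kuj kaj h1 h2 h3 h4 h5 h6 h3 h2.
Qed.

Lemma chi_nbr_pair v ui uj ai ai' aj aj' k :
  e v ui -> e v uj -> ui != uj -> other_nbrs e ui v ai ai' -> other_nbrs e uj v aj aj' ->
  k \in G -> k v = v -> k ui = ui -> k uj = uj ->
  (k ai = ai /\ k aj = aj) \/ (k ai = ai' /\ k aj = aj') -> chi v k.
Proof.
move=> evi evj nij /and5P[eai eai' naa nai nai'] /and5P[eaj eaj' naa' naj naj'].
move=> kG kv kui kuj.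
have arc a b : a != v -> b != v -> e ui a -> e uj b -> is_sarc e 4 [:: a; ui; v; uj; b].
  move=> nav nbv ea eb; rewrite sarc4E (sym_e a) ea (sym_e ui v) evi evj eb nav nij.
  by rewrite eq_sym nbv.
case=> [[kai kaj]|[kai kaj]].
  by rewrite (sreg4_fix (arc _ _ nai naj eai eaj) kG kai kui kv kuj kaj) chi1.
have [h hG [hv ->]] := stab_square (arc _ _ nai naj eai eaj) (arc _ _ nai' naj' eai' eaj')
  naa naa' kG kv kui kuj kai kaj.
exact: chi_sq.
Qed.

Lemma chi_fix_nbrs v k : k \in G -> k v = v -> (forall u, e v u -> k u = u) -> chi v k.
Proof.
move=> kG kv kN.
have far u : e v u -> exists a a', other_nbrs e u v a a' /\ (k a = a \/ k a = a').
  move=> evu; have euv : e u v by rewrite sym_e.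
  have [a [a' o]] := cubic_other_nbrs cubic_e euv; exists a, a'; split=> //.
  by case: (Aut_fix_edge cubic_e (AutG kG) (kN u evu) kv euv o) => -[]; auto.
have [u1 e1] := cubic_nbr cubic_e v.
have [u2 [u3 /and5P[e2 e3 n23 n21 n31]]] := cubic_other_nbrs cubic_e e1.
have n12 : u1 != u2 by rewrite eq_sym.
have n13 : u1 != u3 by rewrite eq_sym.
have [a1 [a1' [o1 F1]]] := far _ e1.
have [a2 [a2' [o2 F2]]] := far _ e2.
have [a3 [a3' [o3 F3]]] := far _ e3.
have P12 := chi_nbr_pair e1 e2 n12 o1 o2 kG kv (kN _ e1) (kN _ e2).
have P13 := chi_nbr_pair e1 e3 n13 o1 o3 kG kv (kN _ e1) (kN _ e3).
have P23 := chi_nbr_pair e2 e3 n23 o2 o3 kG kv (kN _ e2) (kN _ e3).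
by case: F1 F2 F3 => f1 [] f2 [] f3;
  by [apply: P12; tauto | apply: P13; tauto | apply: P23; tauto].
Qed.

Lemma chi_arc_stab u y x1 x2 t : e u y -> other_nbrs e u y x1 x2 ->
  t \in G -> t u = u -> t y = y -> t x1 = x2 -> chi u t ->
  forall g, g \in G -> g u = u -> g y = y -> chi u g.
Proof.
move=> euy o tG tu ty tx ct g gG gu gy.
have fixN m : m \in G -> m u = u -> m y = y -> m x1 = x1 -> chi u m.
  move=> mG mu my mx; apply: chi_fix_nbrs => //.
  exact: (Aut_fix_nbrs cubic_e (AutG mG) mu my euy o mx).
case: (Aut_fix_edge cubic_e (AutG gG) gu gy euy o) => -[gx _]; first exact: fixN.
have tVu : t^-1 u = u by rewrite -{1}tu permK.
have tVy : t^-1 y = y by rewrite -{1}ty permK.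
rewrite -(mulgVK t g) chiMl ?groupM ?groupV ?permM ?gu ?tVu //.
by apply: fixN; rewrite ?groupM ?groupV ?permM ?gu ?tVu ?gy ?tVy // gx -tx permK.
Qed.

Lemma stab_swap u v x1 x2 : e u v -> other_nbrs e u v x1 x2 ->
  exists2 r, r \in G & [/\ r u = u, r v = x1, r x1 = v & r x2 = x2].
Proof.
move=> euv o; case/and5P: (o) => ex1 ex2 nx12 nx1v nx2v.
have [r rG [rv ru rx1]] : exists2 r, r \in G & map r [:: v; u; x1] = [:: x1; u; v].
  apply: (sregular_karc sym_e cubic_e sreg (k := 2)) => //.
    by rewrite sarc2E (sym_e v) euv ex1 eq_sym nx1v.
  by rewrite sarc2E (sym_e x1) ex1 euv nx1v.
exists r => //; split=> //.
have erx2 : e u (r x2) by rewrite -{1}ru Aut_graphE ?AutG.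
case/or3P: (cubic_nbr3 cubic_e euv o erx2) => /eqP rx2 //.
  by move: nx12; rewrite -(inj_eq (@perm_inj _ r)) rx1 rx2 eqxx.
by move: nx2v; rewrite -(inj_eq (@perm_inj _ r)) rx2 rv eqxx.
Qed.

Lemma chi_vertex_stab u v x1 x2 t : e u v -> other_nbrs e u v x1 x2 ->
  t \in G -> t u = u -> t v = v -> t x1 = x2 -> chi u t ->
  forall g, g \in G -> g u = u -> chi u g.
Proof.
move=> euv o tG tu tv tx ct g gG gu.
(* [t] and [t ^ r] act on the neighbours of [u] as two distinct transpositions,
   which generate the action of the stabiliser of [u] on them. *)
case/and5P: (o) => _ _ nx12 _ _.
have [r rG [ru rv rx1 rx2]] := stab_swap euv o.
have tx2 : t x2 = x1.
  case: (Aut_fix_edge cubic_e (AutG tG) tu tv euv o) => -[tx1 tx2] //.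
  by move: nx12; rewrite -{1}tx1 tx eqxx.
have rV z w : r z = w -> r^-1 w = z by move=> <-; rewrite permK.
set t' := t ^ r.
have t'E z : t' z = r (t (r^-1 z)) by rewrite /t' conjgE !permM.
have t'G : t' \in G by rewrite groupJ.
have t'u : t' u = u by rewrite t'E (rV _ _ ru) tu ru.
have t'x2 : t' x2 = v by rewrite t'E (rV _ _ rx2) tx2 rx1.
have ct' : chi u t' by rewrite -{1}ru /t' chiJ.
clearbody t'.
have fixv := chi_arc_stab euv o tG tu tv tx ct.
have back m : m \in G -> m u = u -> chi u m -> m (g v) = v -> chi u g.
  move=> mG mu cm mgv; rewrite -(chiMl gG mG gu mu cm).
  by apply: fixv; rewrite ?groupM ?permM ?gu.
have egv : e u (g v) by rewrite -{1}gu Aut_graphE ?AutG.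
case/or3P: (cubic_nbr3 cubic_e euv o egv) => /eqP gv; first exact: fixv.
  apply: (back (t * t')); rewrite ?groupM ?permM ?tu ?t'u ?gv ?tx ?t'x2 //.
  by rewrite chiM // ct ct'.
by apply: (back t'); rewrite ?gv.
Qed.

Lemma stab_nbrs_nontrivial v :
  exists2 z, z \in G & [/\ z v = v, forall u, e v u -> z u = u & z != 1].
Proof.
have [u evu] := cubic_nbr cubic_e v.
have [x [x' o]] := cubic_other_nbrs cubic_e evu; case/and5P: (o) => evx _ _ nxu _.
have euv : e u v by rewrite sym_e.
have [y [_ /and5P[euy _ _ nyv _]]] := cubic_other_nbrs cubic_e euv.
have eyu : e y u by rewrite sym_e.
have [q [q' /and5P[eyq eyq' nqq nqu nq'u]]] := cubic_other_nbrs cubic_e eyu.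
have arc w : e y w -> w != u -> is_sarc e 4 [:: x; v; u; y; w].
  by move=> eyw nwu; rewrite sarc4E (sym_e x) evx evu euy eyw nxu eq_sym nyv eq_sym nwu.
have [z zG [zx zv zu _ zq]] := sreg4_map (arc _ eyq nqu) (arc _ eyq' nq'u).
exists z => //; split=> //; first exact: (Aut_fix_nbrs cubic_e (AutG zG) zv zu evu o zx).
by apply: contra_neq nqq => z1; rewrite -zq z1 perm1.
Qed.

Hypothesis conn_e : forall x y, connect e x y.

Lemma stab_nbrs_trivial v z :
  (forall u y x1 x2 t, e u y -> other_nbrs e u y x1 x2 ->
     t \in G -> t u = u -> t y = y -> t x1 = x2 -> ~~ chi u t) ->
  z \in G -> z v = v -> (forall u, e v u -> z u = u) -> z = 1.
Proof.
move=> bad zG zv zN.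
pose A := [pred a | (z a == a) && [forall b, e a b ==> (z b == b)]].
have AP a : reflect (z a = a /\ forall b, e a b -> z b = b) (a \in A).
  rewrite inE; apply: (iffP andP) => -[/eqP za zNa]; split=> //.
    by move=> b eab; apply/eqP/(implyP (forallP zNa b)).
  by apply/forallP => b; apply/implyP => /zNa ->.
have A_closed a b : e a b -> a \in A -> b \in A.
  move=> eab /AP[za zNa]; have zb := zNa b eab; apply/AP; split=> //.
  have eba : e b a by rewrite sym_e.
  have [b1 [b2 o]] := cubic_other_nbrs cubic_e eba.
  case: (Aut_fix_edge cubic_e (AutG zG) zb za eba o) => -[zb1 _].
    exact: (Aut_fix_nbrs cubic_e (AutG zG) zb za eba o zb1).
  have := bad _ _ _ _ _ eba o zG zb za zb1.
  by rewrite -(chi_edge zG eab za zb) (chi_fix_nbrs zG za zNa).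
have symc := sym_connect_sym sym_e.
have Aall a : a \in A.
  by rewrite -(closed_connect (intro_closed symc A_closed) (conn_e v a)); apply/AP.
by apply/permP => a; rewrite perm1; case/AP: (Aall a).
Qed.

Lemma stab_char_trivial4 v g : g \in G -> g v = v -> chi v g.
Proof.
move=> gG gv; apply/negPn/negP => nchi.
have bad u y x1 x2 t : e u y -> other_nbrs e u y x1 x2 ->
    t \in G -> t u = u -> t y = y -> t x1 = x2 -> ~~ chi u t.
  move=> euy o tG tu ty tx; apply/negP => ct.
  have [r rG rv] := sregular_vertex sym_e cubic_e sreg v u isT.
  have gru : (g ^ r) u = u by rewrite -rv conjgE !permM permK gv.
  move: (chi_vertex_stab euy o tG tu ty tx ct (groupJ gG rG) gru).
  by rewrite -rv chiJ ?(negbTE nchi).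
have [z zG [zv zN]] := stab_nbrs_nontrivial v.
by rewrite (stab_nbrs_trivial bad zG zv zN) eqxx.
Qed.

End FourRegular.
End StabilizerCharacter.

Lemma proj_inv (V W : finType) (p : W -> V) (k : {perm W}) (g : {perm V}) :
  (forall w, p (k w) = g (p w)) -> forall w, p (k^-1 w) = g^-1 (p w).
Proof. by move=> kg w; rewrite -{2}(permKV k w) kg permK. Qed.

Section TwoCover.
Variables (V W : finType) (e : rel V) (f : rel W) (p : W -> V).
Hypotheses (cov : regular_covering e f p) (ct2 : #|CT f p| = 2).

Lemma cover_surj v : exists w, p w = v.
Proof. by case: cov. Qed.

Lemma cover_hom x y : f x y -> e (p x) (p y).
Proof. by case: cov => _ hom _ _; apply: hom. Qed.

Lemma cover_nbr_inj w x y : f w x -> f w y -> p x = p y -> x = y.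
Proof. by case: cov => _ _ /(_ w)[inj _] _ fx fy; apply: inj; rewrite inE. Qed.

Lemma cover_nbr_lift w u : e (p w) u -> exists2 y, f w y & p y = u.
Proof.
case: cov => _ _ /(_ w)[_ E] _ eu.
have : u \in p @: [set y | f w y] by rewrite E inE.
by case/imsetP => y; rewrite inE => fy ->; exists y.
Qed.

Lemma CT_Aut_proj d : d \in CT f p -> d \in Aut_graph f /\ forall w, p (d w) = p w.
Proof. by rewrite inE => /andP[-> /forallP pd]; split => // w; apply/eqP. Qed.

Lemma CT1 : 1 \in CT f p.
Proof.
rewrite !inE; apply/andP; split; apply/forallP => x; rewrite perm1 //.
by apply/forallP => y; rewrite perm1.
Qed.

Lemma CT_nontrivial : exists2 c, c \in CT f p & c != 1.
Proof.
have : #|CT f p :\ 1| == 1%N by have := cardsD1 1 (CT f p); rewrite ct2 CT1 => -[->].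
case/cards1P => c E; have : c \in CT f p :\ 1 by rewrite E set11.
by rewrite in_setD1 => /andP[c1 cCT]; exists c.
Qed.

Variable c : {perm W}.
Hypotheses (cCT : c \in CT f p) (c1 : c != 1).

Lemma CTE : CT f p = [set 1; c].
Proof.
apply/esym/eqP; rewrite eqEcard ct2 cards2 eq_sym c1 andbT.
by apply/subsetP => d /set2P[] ->; rewrite ?CT1.
Qed.

Lemma ct_fixfree w : c w != w.
Proof.
apply/eqP => cw; case: cov => _ _ _ /(_ w w erefl)[d [_ d_uniq]].
by move: c1; rewrite -(d_uniq c) ?(d_uniq 1) ?eqxx ?perm1 ?CT1.
Qed.

Lemma fibre_eq w y : p y = p w -> y = w \/ y = c w.
Proof.
case: cov => _ _ _ /(_ w y) fib /esym/fib[d [[dCT <-] _]].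
by move: dCT; rewrite CTE => /set2P[] ->; [left; rewrite perm1 | right].
Qed.

Lemma ct_proj w : p (c w) = p w.
Proof. by case: (CT_Aut_proj cCT). Qed.

Lemma ct_invol w : c (c w) = w.
Proof.
case: (fibre_eq (y := c (c w)) (w := w)); rewrite ?ct_proj // => /perm_inj E.
by move: (ct_fixfree w); rewrite E eqxx.
Qed.

Lemma lift_commute_ct (k : {perm W}) (g : {perm V}) :
  (forall w, p (k w) = g (p w)) -> forall w, k (c w) = c (k w).
Proof.
move=> kg w; case: (fibre_eq (w := k w) (y := k (c w))); rewrite ?kg ?ct_proj //.
by move/perm_inj => E; move: (ct_fixfree w); rewrite E eqxx.
Qed.

Lemma cdc_of_bipartition (O : {pred W}) :
  (forall w, (c w \in O) = (w \notin O)) ->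
  (forall x y, f x y -> (x \in O) != (y \in O)) ->
  is_canonical_double_cover e f p.
Proof.
move=> Oc fO; pose phi w := (p w, w \in O).
have phi_inj : injective phi.
  move=> x y [pxy Oxy]; case: (fibre_eq (esym pxy)) => // yc.
  by move: Oxy; rewrite yc Oc; case: (x \in O).
have phi_onto vb : vb \in codom phi.
  case: vb => v b; have [w <-] := cover_surj v.
  have [<-|nb] := eqVneq (w \in O) b; first exact: codom_f.
  have -> : (p w, b) = phi (c w) by rewrite /phi ct_proj Oc; case: b nb; case: (w \in O).
  exact: codom_f.
exists phi; split=> // [|x y].
  apply: (inj_card_bij phi_inj); rewrite -(card_codom phi_inj).
  by apply/subset_leq_card/subsetP => vb _; apply: phi_onto.
rewrite /cdc_rel /=; apply/idP/andP => [fxy|[exy dxy]]; first by rewrite cover_hom // fO.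
have [y' fxy' py'] := cover_nbr_lift exy.
case: (fibre_eq py') => [<- //|y'c].
by move: (fO _ _ fxy') dxy; rewrite y'c Oc; case: (x \in O); case: (y \in O).
Qed.

Section Complement.
Variables (G : {group {perm V}}) (K : {group {perm W}}).
Hypothesis glift : forall g, g \in G -> exists tg, is_lift e f p g tg.
Hypotheses (KCT : CT f p :&: K = 1) (KL : CT f p * K = lifted_group f p G).

Lemma K_lifted k : k \in K ->
  k \in Aut_graph f /\ exists2 g, g \in G & forall w, p (k w) = g (p w).
Proof.
move=> kK; have : k \in lifted_group f p G.
  by rewrite -KL; apply/mulsgP; exists 1 k; rewrite ?CT1 ?mul1g.
rewrite inE => /andP[kA /exists_inP[g gG /forallP kg]].
by split=> //; exists g => // w; apply/eqP.
Qed.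

Lemma K_ct k w : k \in K -> k (c w) = c (k w).
Proof. by case/K_lifted => _ [g _ kg]; apply: lift_commute_ct kg w. Qed.

Lemma lift_in_K g : g \in G -> exists2 k, k \in K & forall w, p (k w) = g (p w).
Proof.
move=> gG; have [tg [tgA tgp]] := glift gG.
have : tg \in lifted_group f p G.
  by rewrite inE tgA; apply/exists_inP; exists g => //; apply/forallP => w; apply/eqP.
rewrite -KL => /mulsgP[d k dCT kK tgE]; rewrite {}tgE in tgp; exists k => // w.
have [_ dp] := CT_Aut_proj dCT.
by have := tgp (d^-1 w); rewrite permM permKV -(dp (d^-1 w)) permKV.
Qed.

Lemma K_lift_uniq k1 k2 (g : {perm V}) : k1 \in K -> k2 \in K ->
  (forall w, p (k1 w) = g (p w)) -> (forall w, p (k2 w) = g (p w)) -> k1 = k2.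
Proof.
move=> k1K k2K k1g k2g; have mK : k1 * k2^-1 \in K by rewrite groupM ?groupV.
apply/eqP; rewrite eq_mulgV1; apply/eqP/set1gP.
rewrite -KCT inE mK andbT inE (proj1 (K_lifted mK)) /=.
by apply/forallP => w; rewrite permM (proj_inv k2g) k1g permK.
Qed.

(* The default [1] is only reached for [g] outside [G]. *)
Definition klift g := odflt 1 [pick k in K | [forall w, p (k w) == g (p w)]].

Lemma kliftP g : g \in G -> klift g \in K /\ forall w, p (klift g w) = g (p w).
Proof.
move=> gG; rewrite /klift; case: pickP => [k /andP[kK /forallP kg] | none] /=.
  by split=> // w; apply/eqP.
have [k kK kg] := lift_in_K gG.
by move: (none k); rewrite kK; case/negP; apply/forallP => w; apply/eqP.
Qed.

Lemma kliftK g : g \in G -> klift g \in K. Proof. by case/kliftP. Qed.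

Lemma klift_proj g w : g \in G -> p (klift g w) = g (p w).
Proof. by case/kliftP => _; apply. Qed.

Lemma K_klift k : k \in K -> exists2 g, g \in G & k = klift g.
Proof.
move=> kK; have [_ [g gG kg]] := K_lifted kK; exists g => //.
by apply: (K_lift_uniq kK (kliftK gG) kg) => w; rewrite klift_proj.
Qed.

Lemma kliftM g1 g2 : g1 \in G -> g2 \in G -> klift (g1 * g2) = klift g1 * klift g2.
Proof.
move=> G1 G2; apply: (K_lift_uniq (kliftK (groupM G1 G2)) (groupM (kliftK G1) (kliftK G2))).
  by move=> w; rewrite klift_proj ?groupM.
by move=> w; rewrite !permM !klift_proj.
Qed.

Lemma kliftV g : g \in G -> klift g^-1 = (klift g)^-1.
Proof.
move=> gG; apply: (K_lift_uniq (kliftK (groupVr gG)) (groupVr (kliftK gG))).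
  by move=> w; rewrite klift_proj ?groupV.
by apply: proj_inv => w; rewrite klift_proj.
Qed.

Lemma klift_stab g w : g \in G -> g (p w) = p w -> klift g w = w \/ klift g w = c w.
Proof. by move=> gG gw; apply: fibre_eq; rewrite klift_proj. Qed.

Definition fixes_fibre v g := [forall w, (p w == v) ==> (klift g w == w)].

Lemma fixes_fibreE v g w : g \in G -> g v = v -> p w = v ->
  fixes_fibre v g = (klift g w == w).
Proof.
move=> gG gv pw; apply/forallP/eqP => [/(_ w)|kw y]; first by rewrite pw eqxx => /eqP.
apply/implyP => /eqP py.
case: (fibre_eq (w := w) (y := y)); rewrite ?py ?pw // => ->; first by rewrite kw.
by rewrite K_ct ?kliftK // kw.
Qed.

Lemma fixes_fibreM v g1 g2 : g1 \in G -> g2 \in G -> g1 v = v -> g2 v = v ->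
  fixes_fibre v (g1 * g2) = (fixes_fibre v g1 == fixes_fibre v g2).
Proof.
move=> G1 G2 g1v g2v; have [w pw] := cover_surj v.
have g12v : (g1 * g2) v = v by rewrite permM g1v g2v.
have nc y : (c y == y) = false by apply/negbTE/ct_fixfree.
rewrite !(fixes_fibreE _ _ pw) ?groupM // kliftM // permM.
case: (klift_stab (w := w) G1); rewrite ?pw // => ->; first by rewrite eqxx.
rewrite K_ct ?kliftK // nc.
by case: (klift_stab (w := w) G2); rewrite ?pw // => ->; rewrite ?ct_invol eqxx nc.
Qed.

Lemma fixes_fibre_edge v u g : g \in G -> e v u -> g v = v -> g u = u ->
  fixes_fibre v g = fixes_fibre u g.
Proof.
move=> gG evu gv gu; have [w pw] := cover_surj v.
have [w' fww' pw'] := cover_nbr_lift (w := w) (u := u) ltac:(by rewrite pw).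
rewrite (fixes_fibreE gG gv pw) (fixes_fibreE gG gu pw').
have [kA _] := K_lifted (kliftK gG).
have fk : f (klift g w) (klift g w') by rewrite Aut_graphE.
have [cA _] := CT_Aut_proj cCT.
case: (klift_stab (w := w) gG); rewrite ?pw // => kw; rewrite kw in fk *.
  by rewrite eqxx; apply/esym/eqP/(cover_nbr_inj fk fww'); rewrite klift_proj // pw' gu.
have fc : f (c w) (c w') by rewrite Aut_graphE.
have -> : klift g w' = c w'.
  by apply: (cover_nbr_inj fk fc); rewrite klift_proj // ct_proj pw' gu.
by rewrite !(negbTE (ct_fixfree _)).
Qed.

Lemma fixes_fibreJ v g r : g \in G -> r \in G -> g v = v ->
  fixes_fibre (r v) (g ^ r) = fixes_fibre v g.
Proof.
move=> gG rG gv; have [w pw] := cover_surj v.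
have grv : (g ^ r) (r v) = r v by rewrite conjgE !permM permK gv.
rewrite (fixes_fibreE gG gv pw) (fixes_fibreE (w := klift r w) (groupJ gG rG) grv).
  rewrite conjgE !kliftM ?groupM ?groupV // kliftV // !permM permK.
  by rewrite (inj_eq (@perm_inj _ (klift r))).
by rewrite klift_proj // pw.
Qed.

Section Regular.
Variable s : nat.
Hypotheses (sym_e : symmetric e) (cubic_e : cubic e) (sGA : G \subset Aut_graph e).
Hypotheses (conn_e : forall x y, connect e x y) (s14 : s = 1%N \/ s = 4%N).
Hypothesis sreg : s_regular e G s.
Hypotheses (sym_f : symmetric f) (conn_f : forall x y, connect f x y).

Lemma stab_fixes_fibre v g : g \in G -> g v = v -> fixes_fibre v g.
Proof.
move=> gG gv; case: s14 sreg => -> sreg'.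
  exact: stab_char_trivial1 (@fixes_fibreM) sym_e cubic_e sGA sreg' _ _ gG gv.
exact: stab_char_trivial4 (@fixes_fibreM) sym_e cubic_e sGA sreg'
  (@fixes_fibre_edge) (@fixes_fibreJ) conn_e _ _ gG gv.
Qed.

Let s_gt0 : 0 < s. Proof. by case: s14 => ->. Qed.

Lemma K_fibre_fix k w : k \in K -> p (k w) = p w -> k w = w.
Proof.
case/K_klift => g gG -> pk; have gw : g (p w) = p w by rewrite -klift_proj.
by apply/eqP; rewrite -(fixes_fibreE gG gw erefl); apply: stab_fixes_fibre.
Qed.

Lemma K_nonadjacent k w : k \in K -> ~~ f w (k w).
Proof.
move=> kK; apply/negP => fw; pose O := [set (k' : {perm W}) w | k' in K].
have nbrO b : f w b -> b \in O.
  move=> fb; have [r rG [rv ra]] :=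
    sregular_arc sym_e cubic_e sreg s_gt0 (cover_hom fw) (cover_hom fb).
  have rw : klift r w = w by apply: K_fibre_fix; rewrite ?kliftK // klift_proj.
  have f1 : f w (klift r (k w)) by rewrite -{1}rw Aut_graphE // (proj1 (K_lifted (kliftK rG))).
  have <- : klift r (k w) = b by apply: (cover_nbr_inj f1 fb); rewrite klift_proj.
  by apply/imsetP; exists (k * klift r); rewrite ?groupM ?kliftK // permM.
have O_closed a b : f a b -> a \in O -> b \in O.
  move=> /[swap] /imsetP[k1 k1K ->] fab.
  have k1VK : k1^-1 \in K by rewrite groupV.
  have : f w (k1^-1 b) by rewrite -{1}(permK k1 w) Aut_graphE // (proj1 (K_lifted k1VK)).
  case/nbrO/imsetP => k2 k2K E; apply/imsetP; exists (k2 * k1); rewrite ?groupM //.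
  by rewrite permM -E permKV.
have : c w \in O.
  rewrite -(closed_connect (intro_closed (sym_connect_sym sym_f) O_closed) (conn_f w (c w))).
  by apply/imsetP; exists 1; rewrite ?perm1.
case/imsetP => k' k'K E; have := K_fibre_fix (w := w) k'K; rewrite -E ct_proj => /(_ erefl).
by apply/eqP/ct_fixfree.
Qed.

Lemma cdc_of_complement (w0 : W) : is_canonical_double_cover e f p.
Proof.
pose O := [set (k : {perm W}) w0 | k in K].
have cO w : (c w \in O) = (w \notin O).
  apply/idP/idP => [/imsetP[k2 k2K E2]|wO].
    apply/imsetP => -[k1 k1K E1].
    have m_c : (k1 * k2^-1) (c w0) = w0 by rewrite permM K_ct // -E1 E2 permK.
    have := K_fibre_fix (w := c w0) (groupM k1K (groupVr k2K)); rewrite m_c ct_proj.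
    by move=> /(_ erefl) /esym/eqP; apply/negP/ct_fixfree.
  have [r rG rw] := sregular_vertex sym_e cubic_e sreg (p w0) (p w) s_gt0.
  case: (fibre_eq (w := w) (y := klift r w0)); rewrite ?klift_proj // => E.
    by case/negP: wO; apply/imsetP; exists (klift r); rewrite ?kliftK.
  by apply/imsetP; exists (klift r); rewrite ?kliftK // E ct_invol.
have nfO x y : x \in O -> y \in O -> ~~ f x y.
  case/imsetP => k1 k1K ->; case/imsetP => k2 k2K ->.
  have k1VK : k1^-1 \in K by rewrite groupV.
  rewrite -(Aut_graphE _ _ (proj1 (K_lifted k1VK))) permK -permM.
  exact: K_nonadjacent (groupM k2K k1VK).
apply: (cdc_of_bipartition cO) => x y fxy.
case xO: (x \in O); case yO: (y \in O) => //=; first by case/negP: (nfO _ _ xO yO).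
have cA : c \in Aut_graph f by case: (CT_Aut_proj cCT).
by have := nfO (c x) (c y); rewrite !cO xO yO Aut_graphE // fxy => /(_ isT isT).
Qed.

End Regular.
End Complement.
End TwoCover.

Theorem theorem4p1 (V : finType) (e : rel V) (G : {group {perm V}}) (s : nat) :
  simple_graph e -> connected e -> cubic e ->
  G \subset Aut_graph e -> (s = 1%N \/ s = 4%N) -> s_regular e G s ->
  forall (W : finType) (f : rel W) (p : W -> V),
    simple_graph f -> connected f ->
    two_cover e f p -> G_split e f p G ->
    is_canonical_double_cover e f p.
Proof.
move=> [sym_e _] [_ conn_e] cubic_e sGA s14 sreg W f p [sym_f _] [W_gt0 conn_f].
move=> [cov ct2] [glift /set0Pn[K /setIdP[/eqP KCT /eqP KL]]].
have [w0 _] := card_gt0P W_gt0.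
have [c cCT c1] := CT_nontrivial ct2.
exact: (cdc_of_complement cov ct2 cCT c1 glift KCT KL
  sym_e cubic_e sGA conn_e s14 sreg sym_f conn_f w0).
Qed.
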